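(* Let $\hat c\in\mathcal C$ satisfy the out-of-sample guarantee with speed $(a_T)$, where $(a_T)$ is any sequence of positive reals with $a_T\to\infty$. Then for all $\mathbb P\in\mathcal P^o$ and $x\in\mathcal X$, $\liminf_{T\to\infty}\big(\hat c(x,\mathbb P,T)-c(x,\mathbb P)\big)\ge0$.
   Context: Setting: $\Sigma=\{1,\dots,d\}$ ($d\ge2$) is finite; $\mathcal P\subset\mathbb R^d$ is the probability simplex over $\Sigma$ and $\mathcal P^o$ its relative interior (all entries positive). $\mathcal X\subset\mathbb R^n$ is compact and $\ell:\mathcal X\times\Sigma\to\mathbb R$ is continuous in $x$ for each $i$. For $x\in\mathcal X$, $\mu\in\mathbb R^d$ let $c(x,\mu)=\sum_{i\in\Sigma}\ell(x,i)\mu(i)$. Data $\xi_1,\xi_2,\dots$ are i.i.d. with law $\mathbb P\in\mathcal P$, $\mathbb P^\infty$ denotes their joint law, and $\hat{\mathbb P}_T(i)=\frac1T\sum_{t=1}^T\mathbf 1\{\xi_t=i\}$. A predictor is a sequence $\hat c=(\hat c(\cdot,\cdot,T))_{T\in\mathbb N}$ of functions $\mathcal X\times\mathcal P\to\mathbb R$. It is regular, written $\hat c\in\mathcal C$, if (i) the sequence $(\hat c(\cdot,\cdot,T))_T$ is uniformly bounded and equicontinuous on $\mathcal X\times\mathcal P$, and (ii) each $\hat c(x,\cdot,T)$ is differentiable in $\mathbb P$ and the sequence of derivative maps $(x,\mathbb P)\mapsto\nabla_{\mathbb P}\hat c(x,\mathbb P,T)$ is uniformly bounded and equicontinuous. (A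 sequence $(f_T)$ is equicontinuous if for every point $y$ and $\varepsilon>0$ there is a neighbourhood $U$ of $y$ with $|f_T(y)-f_T(z)|<\varepsilon$ for all $z\in U$ and all $T$.) Out-of-sample guarantee with speed $(a_T)$: for all $x\in\mathcal X$ and $\mathbb P\in\mathcal P^o$, $\limsup_{T\to\infty}\frac1{a_T}\log\mathbb P^\infty\big(c(x,\mathbb P)>\hat c(x,\hat{\mathbb P}_T,T)\big)\le-1$. *)

From HB Require Import structures.
From mathcomp Require Import all_boot all_order all_algebra.
From mathcomp Require Import all_classical all_reals all_analysis.
Set Implicit Arguments. Unset Strict Implicit. Unset Printing Implicit Defensive.
Import Order.TTheory GRing.Theory Num.Theory.
Import numFieldNormedType.Exports.
Local Open Scope classical_set_scope.
Local Open Scope ring_scope.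

(* Sigma = 'I_d (i.e. {0,...,d-1} in place of {1,...,d});
   a vector mu in R^d is a row vector 'rV[R]_d, mu(i) = mu 0 i. *)

Definition simplex (R : realType) (d : nat) : set 'rV[R]_d :=
  [set mu | (forall i, 0 <= mu 0 i) /\ \sum_(i < d) mu 0 i = 1].

Definition simplex_int (R : realType) (d : nat) : set 'rV[R]_d :=
  [set mu | (forall i, 0 < mu 0 i) /\ \sum_(i < d) mu 0 i = 1].

Definition cost (R : realType) (n d : nat) (l : 'rV[R]_n -> 'I_d -> R)
  (x : 'rV[R]_n) (mu : 'rV[R]_d) : R :=
  \sum_(i < d) l x i * mu 0 i.

Definition empirical (R : realType) (d T : nat) (s : {ffun 'I_T -> 'I_d}) : 'rV[R]_d :=
  \row_(i < d) (#|[set t | s t == i]|%:R / T%:R).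

(* P^oo( c(x,P) > chat(x, Phat_T, T) ): the event depends only on xi_1..xi_T,
   whose joint law is the product law P^T on Sigma^T. *)
Definition prob_shortfall (R : realType) (n d : nat)
  (l : 'rV[R]_n -> 'I_d -> R) (chat : nat -> 'rV[R]_n -> 'rV[R]_d -> R)
  (x : 'rV[R]_n) (P : 'rV[R]_d) (T : nat) : R :=
  \sum_(s : {ffun 'I_T -> 'I_d})
     (\prod_(t < T) P 0 (s t)) *
     (if chat T x (@empirical R d T s) < cost l x P then 1 else 0).

(* Regularity (chat \in C); predictors are indexed by T >= 1 and only their
   values on X x P matter. *)
Definition regular (R : realType) (n d : nat) (X : set 'rV[R]_n)
  (chat : nat -> 'rV[R]_n -> 'rV[R]_d -> R) : Prop :=
  (exists M : R, forall T x mu, (0 < T)%N -> X x -> @simplex R d mu ->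
      `|chat T x mu| <= M) /\
  (forall x mu, X x -> @simplex R d mu -> forall e : R, 0 < e ->
     exists2 delta : R, 0 < delta &
       forall T y nu, (0 < T)%N -> X y -> @simplex R d nu ->
         `|x - y| < delta -> `|mu - nu| < delta ->
         `|chat T x mu - chat T y nu| < e) /\
  (exists D : nat -> 'rV[R]_n -> 'rV[R]_d -> 'rV[R]_d,
     (forall T x mu, (0 < T)%N -> X x -> @simplex R d mu ->
        forall e : R, 0 < e -> exists2 delta : R, 0 < delta &
          forall nu, @simplex R d nu -> `|nu - mu| < delta ->
            `|chat T x nu - chat T x mu
               - \sum_(i < d) D T x mu 0 i * (nu 0 i - mu 0 i)|
              <= e * `|nu - mu|) /\
     (exists M : R, forall T x mu, (0 < T)%N -> X x -> @simplex R d mu ->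
        `|D T x mu| <= M) /\
     (forall x mu, X x -> @simplex R d mu -> forall e : R, 0 < e ->
        exists2 delta : R, 0 < delta &
          forall T y nu, (0 < T)%N -> X y -> @simplex R d nu ->
            `|x - y| < delta -> `|mu - nu| < delta ->
            `|D T x mu - D T y nu| < e)).

(* limsup_{T -> oo} (1/a_T) log p_T <= -1  (with log 0 = -oo), written out:
   for every eps > 0, eventually (1/a_T) log p_T <= -1 + eps,
   i.e. p_T <= exp(a_T (-1 + eps)) (a_T > 0). *)
Definition limsup_rate_le_m1 (R : realType) (a p : nat -> R) : Prop :=
  forall eps : R, 0 < eps ->
    \forall T \near \oo, p T <= expR (a T * (-1 + eps)).

Definition oos_guarantee (R : realType) (n d : nat) (X : set 'rV[R]_n)
  (l : 'rV[R]_n -> 'I_d -> R) (chat : nat -> 'rV[R]_n -> 'rV[R]_d -> R)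
  (a : nat -> R) : Prop :=
  forall x P, X x -> @simplex_int R d P ->
    limsup_rate_le_m1 a (prob_shortfall l chat x P).

From HB Require Import structures.
From mathcomp Require Import all_boot all_order all_algebra.
From mathcomp Require Import all_classical all_reals all_analysis.
From mathcomp Require Import lra ring.
Set Implicit Arguments. Unset Strict Implicit. Unset Printing Implicit Defensive.
Import Order.TTheory GRing.Theory Num.Theory.
Import numFieldNormedType.Exports.
Local Open Scope classical_set_scope.
Local Open Scope ring_scope.

(* Fix x in X and P in the interior of the simplex, and suppose
   that chat(x,P,T) < c(x,P) - eps for infinitely many T.  By equicontinuity
   of the predictors (at (x,P), uniformly in T) there is a radius delta such
   that chat(x,nu,T) < c(x,P) whenever |nu - P| < delta; so at such T the
   shortfall event contains the event {|Phat_T - P| < delta}.  By Chebyshev's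
   inequality (a weak law of large numbers for the empirical distribution)
   the latter has probability at least 1 - d/(T delta^2) >= 3/4 for T large,
   whereas the out-of-sample guarantee (with eps = 1/2) bounds the shortfall
   probability by exp(-a_T/2) <= 1/3 once a_T >= 4: a contradiction. *)

Section ProductLaw.
Variables (R : realType) (S : finType) (T : nat) (p : S -> R).

Definition sample_weight (s : {ffun 'I_T -> S}) : R := \prod_(t < T) p (s t).

Definition expect (f : {ffun 'I_T -> S} -> R) : R :=
  \sum_s sample_weight s * f s.

Lemma expect_ext f g : (forall s, f s = g s) -> expect f = expect g.
Proof. by move=> fg; apply: eq_bigr => s _; rewrite fg. Qed.

Lemma expectB f g : expect (fun s => f s - g s) = expect f - expect g.
Proof. by rewrite /expect -sumrB; apply: eq_bigr => s _; rewrite mulrBr. Qed.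

Lemma expectZ c f : expect (fun s => c * f s) = c * expect f.
Proof. by rewrite /expect big_distrr; apply: eq_bigr => s _; rewrite mulrCA. Qed.

Lemma expect_sum (I : Type) (r : seq I) (F : I -> {ffun 'I_T -> S} -> R) :
  expect (fun s => \sum_(k <- r) F k s) = \sum_(k <- r) expect (F k).
Proof.
rewrite /expect (eq_bigr (fun s => \sum_(k <- r) sample_weight s * F k s)).
  by rewrite exchange_big.
by move=> s _; rewrite big_distrr.
Qed.

Lemma expect_prod (g : 'I_T -> S -> R) :
  expect (fun s => \prod_t g t (s t)) = \prod_t \sum_j p j * g t j.
Proof. by rewrite bigA_distr_bigA; apply: eq_bigr => s _; rewrite /sample_weight -big_split. Qed.

Hypothesis p_ge0 : forall j, 0 <= p j.

Lemma expect_le f g : (forall s, f s <= g s) -> expect f <= expect g.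
Proof.
move=> fg; apply: ler_sum => s _; apply: ler_wpM2l (fg s).
by apply: prodr_ge0 => t _.
Qed.

Hypothesis p_sum1 : \sum_j p j = 1.

Lemma sum_weight1 : \sum_j p j * 1 = 1.
Proof. by rewrite (eq_bigr p) // => j _; rewrite mulr1. Qed.

Lemma expect1 : expect (fun _ => 1) = 1.
Proof.
rewrite (@expect_ext _ (fun s => \prod_(t < T) (fun _ _ => 1 : R) t (s t))).
  by rewrite (expect_prod (fun _ _ => 1)) big1 // => t _; apply: sum_weight1.
by move=> s; rewrite big1.
Qed.

Lemma expect_coord (t : 'I_T) (b : S -> R) :
  expect (fun s => b (s t)) = \sum_j p j * b j.
Proof.
pose g u j := if u == t then b j else 1.
have gE (F : 'I_T -> S -> R) (s : {ffun 'I_T -> S}) :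
    (forall u, u != t -> F u (s u) = 1) -> \prod_u F u (s u) = F t (s t).
  by move=> F1; rewrite (bigD1 t) //= big1 ?mulr1.
rewrite (@expect_ext _ (fun s => \prod_u g u (s u))); last first.
  by move=> s; rewrite gE /g ?eqxx // => u /negbTE ->.
rewrite expect_prod (bigD1 t) //= /g eqxx [X in _ * X]big1 ?mulr1 // => u /negbTE ->.
exact: sum_weight1.
Qed.

Lemma expect_coord2 (t u : 'I_T) (b c : S -> R) : t != u ->
  expect (fun s => b (s t) * c (s u)) = (\sum_j p j * b j) * (\sum_j p j * c j).
Proof.
move=> tu; have ut : u != t by rewrite eq_sym.
pose g v j := if v == t then b j else if v == u then c j else 1.
have split2 (F : 'I_T -> R) :
    \prod_v F v = F t * F u * \prod_(v | (v != t) && (v != u)) F v.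
  by rewrite (bigD1 t) //= (bigD1 u) //= mulrA.
have gt j : g t j = b j by rewrite /g eqxx.
have gu j : g u j = c j by rewrite /g (negbTE ut) eqxx.
have g1 v j : (v != t) && (v != u) -> g v j = 1.
  by case/andP => /negbTE vt /negbTE vu; rewrite /g vt vu.
rewrite (@expect_ext _ (fun s => \prod_v g v (s v))); last first.
  by move=> s; rewrite split2 gt gu big1 ?mulr1 // => v /g1.
rewrite expect_prod split2 (eq_bigr _ (fun j _ => congr1 _ (gt j))).
rewrite (eq_bigr _ (fun j _ => congr1 _ (gu j))) [X in _ * X]big1 ?mulr1 // => v /g1 g1v.
by rewrite (eq_bigr (fun j => p j * 1)) ?sum_weight1 // => j _; rewrite g1v.
Qed.

(* Variance of a sum of T i.i.d. centred terms: the cross terms vanish. *)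
Lemma expect_sum_sqr (c : S -> R) : \sum_j p j * c j = 0 ->
  expect (fun s => (\sum_(t < T) c (s t)) ^+ 2) = T%:R * \sum_j p j * (c j * c j).
Proof.
move=> c_centred.
rewrite (@expect_ext _ (fun s => \sum_(t < T) \sum_(u < T) c (s t) * c (s u))); last first.
  by move=> s; rewrite expr2 big_distrl; apply: eq_bigr => t _; rewrite big_distrr.
rewrite expect_sum (eq_bigr (fun _ => \sum_j p j * (c j * c j))).
  by rewrite sumr_const card_ord mulr_natl.
move=> t _; rewrite expect_sum (bigD1 t) //= big1 ?addr0.
  exact: (expect_coord t (fun j => c j * c j)).
by move=> u ut; rewrite expect_coord2 ?c_centred ?mul0r // eq_sym.
Qed.
End ProductLaw.

Definition kron {R : realType} {d : nat} (i j : 'I_d) : R := (j == i)%:R.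

Lemma sum_kron (R : realType) (d : nat) (j : 'I_d) : \sum_(i < d) kron i j = 1 :> R.
Proof.
rewrite (bigD1 j) //= /kron eqxx big1 ?addr0 // => i ij.
by rewrite eq_sym (negbTE ij).
Qed.

Lemma sum_weight_kron (R : realType) (d : nat) (p : 'I_d -> R) (i : 'I_d) :
  \sum_(j < d) p j * kron i j = p i.
Proof.
rewrite (bigD1 i) //= /kron eqxx mulr1 big1 ?addr0 // => j ji.
by rewrite (negbTE ji) mulr0.
Qed.

Lemma rV_norm_lt (R : realType) (d : nat) (M : 'rV[R]_d) (e : R) :
  0 < e -> (forall i, `|M 0 i| < e) -> `|M| < e.
Proof.
move=> e0 Me; rewrite /Num.Def.normr /= mx_normrE.
by apply: bigmax_lt => // -[i j] _ /=; rewrite (ord1 i).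
Qed.

Section Empirical.
Variables (R : realType) (d T : nat) (P : 'rV[R]_d).

Lemma empirical_entry (s : {ffun 'I_T -> 'I_d}) i :
  (@empirical R d T s) 0 i = (\sum_(t < T) kron i (s t)) / T%:R.
Proof.
rewrite mxE; congr (_ / _).
rewrite -sum1_card natr_sum big_mkcond /=.
apply: eq_bigr => t _; rewrite /kron /in_set unfold_in /= asboolb.
by case: (s t == i).
Qed.

(* Empirical distributions of nonempty samples lie in the simplex, which is
   where the predictors are controlled. *)
Lemma empirical_simplex (s : {ffun 'I_T -> 'I_d}) :
  (0 < T)%N -> simplex (@empirical R d T s).
Proof.
move=> T0; split.
  move=> i; rewrite empirical_entry; apply: divr_ge0; last by rewrite ler0n.
  by apply: sumr_ge0 => t _; rewrite /kron ler0n.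
rewrite (eq_bigr (fun i => (\sum_(t < T) kron i (s t)) / T%:R)); last first.
  by move=> i _; rewrite empirical_entry.
rewrite -big_distrl /= exchange_big /= (eq_bigr (fun _ => 1)); last first.
  by move=> t _; rewrite sum_kron.
by rewrite sumr_const card_ord divff // pnatr_eq0 -lt0n.
Qed.

(* Markov-type pointwise bound: if Phat is not e-close to P then some
   centred count is large, so the normalised sum of squares exceeds 1. *)
Lemma far_indicator_le (s : {ffun 'I_T -> 'I_d}) (e : R) : (0 < T)%N -> 0 < e ->
  1 - (if `|@empirical R d T s - P| < e then 1 else 0) <=
  \sum_(i < d) (\sum_(t < T) (kron i (s t) - P 0 i)) ^+ 2 / (T%:R * e) ^+ 2.
Proof.
move=> T0 e0; set emp := @empirical R d T s.
have terms_ge0 i : 0 <= (\sum_(t < T) (kron i (s t) - P 0 i)) ^+ 2 / (T%:R * e) ^+ 2.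
  by apply: divr_ge0; apply: sqr_ge0.
case: ifP => [_|far]; first by rewrite subrr; apply: sumr_ge0.
rewrite subr0.
have [i Hi] : exists i, e <= `|emp 0 i - P 0 i|.
  apply: contrapT => near_all; move: far; rewrite rV_norm_lt // => i.
  rewrite mxE [(- P) 0 i]mxE; case: (ltP `|emp 0 i - P 0 i| e) => // Hle.
  by exfalso; apply: near_all; exists i.
rewrite (bigD1 i) //=.
suff one_le : 1 <= (\sum_(t < T) (kron i (s t) - P 0 i)) ^+ 2 / (T%:R * e) ^+ 2.
  by apply: le_trans one_le _; rewrite lerDl; apply: sumr_ge0.
have Tp : 0 < (T%:R : R) by rewrite ltr0n.
have -> : \sum_(t < T) (kron i (s t) - P 0 i) = T%:R * (emp 0 i - P 0 i).
  rewrite empirical_entry sumrB sumr_const card_ord mulrBr mulrCA divff ?gt_eqF //.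
  by rewrite mulr1 mulr_natl.
rewrite ler_pdivlMr; last by rewrite exprn_gt0 // mulr_gt0.
rewrite mul1r exprMn [X in _ <= X]exprMn ler_wpM2l //.
rewrite -(real_normK (num_real (emp 0 i - P 0 i))) !expr2.
by apply: ler_pM => //; apply: ltW.
Qed.

Hypothesis P_ge0 : forall j, 0 <= P 0 j.
Hypothesis P_sum1 : \sum_(j < d) P 0 j = 1.

Lemma entry_le1 i : P 0 i <= 1.
Proof. by rewrite -P_sum1 (bigD1 i) //= lerDl; apply: sumr_ge0. Qed.

Lemma empirical_concentration (e : R) : (0 < T)%N -> 0 < e ->
  1 - d%:R / (T%:R * e ^+ 2) <=
  expect (P 0) (fun s => if `|@empirical R d T s - P| < e then 1 else 0).
Proof.
move=> T0 e0; have Tp : 0 < (T%:R : R) by rewrite ltr0n.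
have := expect_le P_ge0 (fun s => far_indicator_le s T0 e0).
rewrite expectB expect1 // expect_sum lerBlDr addrC -lerBlDr => far_bound.
apply: le_trans far_bound; rewrite lerD2l lerN2.
have -> : d%:R / (T%:R * e ^+ 2) = \sum_(i < d) (T%:R / (T%:R * e) ^+ 2).
  rewrite sumr_const card_ord -mulr_natl; field.
  by apply/andP; split; rewrite gt_eqF // exprn_gt0.
apply: ler_sum => i _.
rewrite (@expect_ext R _ T (P 0) _ (fun s => ((T%:R * e) ^+ 2)^-1 *
   (\sum_(t < T) (kron i (s t) - P 0 i)) ^+ 2)); last by move=> s; rewrite mulrC.
rewrite expectZ (expect_sum_sqr T P_sum1 (c := fun j => kron i j - P 0 i)); last first.
  under eq_bigr do rewrite mulrBr.
  by rewrite sumrB sum_weight_kron -big_distrl /= P_sum1 mul1r subrr.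
rewrite [leRHS]mulrC; apply: ler_wpM2l.
  by rewrite invr_ge0 exprn_ge0 // mulr_ge0 // ltW.
rewrite -[leRHS]mulr1; apply: ler_wpM2l; first exact: ltW.
rewrite -P_sum1; apply: ler_sum => j _.
rewrite -[leRHS]mulr1 ler_wpM2l //.
by have := entry_le1 i; have := P_ge0 i; rewrite /kron; case: (j == i) => /=; nra.
Qed.
End Empirical.

Lemma shortfall_ge_concentration (R : realType) (n d T : nat)
  (l : 'rV[R]_n -> 'I_d -> R) (chat : nat -> 'rV[R]_n -> 'rV[R]_d -> R)
  (x : 'rV[R]_n) (P : 'rV[R]_d) (eps delta : R) :
  (forall j, 0 <= P 0 j) -> (0 < T)%N ->
  (forall nu, simplex nu -> `|P - nu| < delta -> `|chat T x P - chat T x nu| < eps) ->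
  chat T x P - cost l x P < - eps ->
  expect (P 0) (fun s => if `|@empirical R d T s - P| < delta then 1 else 0)
    <= prob_shortfall l chat x P T.
Proof.
move=> P_ge0 T0 cont below; apply: expect_le => // s.
case: ifP => [close|_]; last by case: ifP.
have := cont _ (@empirical_simplex R d T s T0); rewrite distrC => /(_ close) near_P.
have := ler_norm (chat T x (@empirical R d T s) - chat T x P); rewrite distrC => dev.
have -> // : chat T x (@empirical R d T s) < cost l x P.
by have := le_lt_trans dev near_P; lra.
Qed.

Lemma expR_half_rate_le (R : realType) (a : R) : 4 <= a -> expR (a * (-1 + 1 / 2)) <= 1 / 3.
Proof.
move=> a4; apply: le_trans (_ : expR (- 2) <= _); first by rewrite ler_expR; lra.
have := expR_ge1Dx (2 : R).
by rewrite expRN -div1r ler_pdivrMr ?expR_gt0 //; lra.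
Qed.

Theorem mainTheorem10 (R : realType) (n d : nat) (hd : (2 <= d)%N)
  (X : set 'rV[R]_n) (hX : compact X)
  (l : 'rV[R]_n -> 'I_d -> R)
  (hl : forall i : 'I_d, {within X, continuous (fun x => l x i)})
  (chat : nat -> 'rV[R]_n -> 'rV[R]_d -> R) (hreg : regular X chat)
  (a : nat -> R) (ha_pos : forall T, (0 < T)%N -> 0 < a T)
  (ha_inf : a @ \oo --> +oo)
  (hoos : oos_guarantee X l chat a) :
  forall P x, @simplex_int R d P -> X x ->
    (* liminf_{T -> oo} (chat(x,P,T) - c(x,P)) >= 0, written out *)
    forall eps : R, 0 < eps ->
      \forall T \near \oo, - eps <= chat T x P - cost l x P.
Proof.
move=> P x hP hx eps eps0.
have hPs : simplex P by case: hP => P_gt0 P_sum1; split => // i; apply: ltW.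
have [P_ge0 P_sum1] := hPs.
have [_ [equicont _]] := hreg.
have [delta delta0 cont] := equicont x P hx hPs eps eps0.
have half_gt0 : (0 : R) < 1 / 2 by [].
have guarantee := hoos x P hx hP (1 / 2) half_gt0.
have a_large : \forall T \near \oo, 4 <= a T by move/cvgryPge: ha_inf; apply.
have T_large : \forall T \near \oo, 4 * d%:R / delta ^+ 2 <= (T%:R : R).
  by have := @cvgr_idn R; move/cvgryPge; apply.
apply: filterS3 guarantee a_large T_large => T short aT4 T4.
have d_gt0 : (0 : R) < d%:R by rewrite ltr0n; apply: leq_trans hd.
have delta2 : (0 : R) < delta ^+ 2 by rewrite exprn_gt0.
have T_gt0 : (0 : R) < T%:R by apply: lt_le_trans T4; rewrite divr_gt0 ?mulr_gt0.
have T0 : (0 < T)%N by rewrite -(ltr0n R).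
rewrite leNgt; apply/negP => below.
have conc := empirical_concentration P_ge0 P_sum1 T0 delta0.
have x_close : `|x - x| < delta by rewrite subrr normr0.
have incl := shortfall_ge_concentration P_ge0 T0
  (fun nu hnu => cont T x nu T0 hx hnu x_close) below.
have small : d%:R / (T%:R * delta ^+ 2) <= 1 / 4.
  rewrite ler_pdivrMr ?mulr_gt0 //; move: T4; rewrite ler_pdivrMr // => T4; lra.
have := le_trans conc (le_trans incl (le_trans short (expR_half_rate_le aT4))).
lra.
Qed.
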